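(* Let $d:\Sigma^n\to\Sigma$ be a depth assignment and let $s,t\in\Sigma^n$ be such that $(s,t)$ is a valid arc of the de Bruijn graph $B_n$. Then \[e_{s[0]} \equiv P(H(s)+e_{d_s}) - P(H(t)+e_{d_t}) \mod K.\]
   Context: Let $k\ge 1$ be an integer, $\Sigma=\{0,1,\dots,k-1\}$ with arithmetic on symbols taken modulo $k$, and $n\ge 1$. For $s\in\Sigma^n$ write $s=s[0]\cdots s[n-1]$. The de Bruijn graph $B_n$ has node set $\Sigma^n$ and an arc $(s,t)$ iff $s[1]\cdots s[n-1]=t[0]\cdots t[n-2]$. A depth assignment is any function $d:\Sigma^n\to\Sigma$, written $s\mapsto d_s$. An arc $(s,t)$ of $B_n$ is valid (with respect to $d$) if, with $b=s[0]$ and $c=t[n-1]$, either ($b+1=c$ and $d_s=d_t$) or ($b+1=d_t$ and $c=d_s$). The histogram $H(s):\Sigma\to\mathbb{Z}$ counts occurrences of each symbol in $s$; $e_b$ is the indicator function of $b\in\Sigma$; $K$ is the constant function $1$ on $\Sigma$; $P(H)(i)=\sum_{j=0}^i H(j)$ is the partial sum of $H:\Sigma\to\mathbb{Z}$; $F\equiv G\mod K$ means $F-G$ is an integer multiple of $K$. *)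

From mathcomp Require Import all_boot all_order all_algebra.
Set Implicit Arguments. Unset Strict Implicit. Unset Printing Implicit Defensive.
Import GRing.Theory.
Local Open Scope ring_scope.

(* Alphabet Sigma = 'I_k (symbols 0..k-1, arithmetic mod k); words of length n
   are n.-tuples over 'I_k. *)
Definition word (k n : nat) := (n.-tuple 'I_k)%type.

(* s[i] as a natural number (value in 0..k-1 when i < n). *)
Definition sym (k n : nat) (s : word k n) (i : nat) : nat := nth 0%N (map val s) i.

Definition dB_arc (k n : nat) (s t : word k n) : Prop :=
  forall i : nat, (i.+1 < n)%N -> sym s i.+1 = sym t i.

Definition depth_assignment (k n : nat) := word k n -> 'I_k.

Definition valid_arc (k n : nat) (d : depth_assignment k n) (s t : word k n) : Prop :=
  let b := sym s 0 in let c := sym t n.-1 in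
  ((b.+1 %% k = c)%N /\ d s = d t) \/ ((b.+1 %% k = d t)%N /\ c = d s).

Definition hist (k n : nat) (s : word k n) : 'I_k -> int :=
  fun a => (count (pred1 a) s)%:Z.

Definition ind (k : nat) (b : nat) : 'I_k -> int := fun a => ((val a == b) : nat)%:Z.

Definition psum (k : nat) (H : 'I_k -> int) : 'I_k -> int :=
  fun i => \sum_(j < k | (val j <= val i)%N) H j.

(* F == G mod K, K the constant function 1: F - G is an integer multiple of K. *)
Definition eqmodK (k : nat) (F G : 'I_k -> int) : Prop :=
  exists m : int, forall i : 'I_k, F i - G i = m.

From mathcomp Require Import all_boot all_order all_algebra.
From mathcomp Require Import zify ring.
Local Open Scope ring_scope.
Import GRing.Theory.

Set Implicit Arguments.
Unset Strict Implicit.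
Unset Printing Implicit Defensive.

(* Along a de Bruijn arc the word t is s shifted by one symbol, so H(s) - H(t)
   = e_b - e_c with b = s[0] and c = t[n-1].  Either kind of valid arc turns
   this into H(s) + e_{d_s} - (H(t) + e_{d_t}) = e_b - e_{b+1}.  Taking partial
   sums, P(e_b - e_{b+1})(i) = [i = b], except when b = k-1, where b+1 wraps
   around to 0 and every value drops by the constant 1. *)

Section PartialSums.
Variable k : nat.

Lemma eq_psum (F G : 'I_k -> int) : F =1 G -> psum F =1 psum G.
Proof. by move=> eqFG i; apply: eq_bigr. Qed.

Lemma psumB (F G : 'I_k -> int) (i : 'I_k) :
  psum F i - psum G i = psum (fun a => F a - G a) i.
Proof. by rewrite /psum sumrB. Qed.

Lemma psum_ind (b : nat) (i : 'I_k) : (b < k)%N ->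
  psum (ind b) i = ((b <= i)%N : nat)%:Z.
Proof.
move=> lt_b_k; rewrite /psum /ind; case: (leqP b i) => [le_b_i | lt_i_b].
  rewrite (bigD1 (Ordinal lt_b_k)) //= eqxx big1 ?addr0 // => j /andP[_ neq_jb].
  by case: eqP => // val_jb; case/eqP: neq_jb; apply: val_inj.
rewrite big1 // => j le_j_i; case: eqP => // val_jb.
by move: le_j_i; rewrite val_jb leqNgt lt_i_b.
Qed.

Lemma ind_sub_psum_succ (b : nat) (i : 'I_k) : (b < k)%N ->
  ind b i - (psum (ind b) i - psum (ind (b.+1 %% k)) i) = ((b.+1 == k) : nat)%:Z.
Proof.
move=> lt_b_k; have lt_b1_k : (b.+1 %% k < k)%N by rewrite ltn_mod; lia.
rewrite !psum_ind // /ind; case: i => i lt_i_k /=.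
case: (ltnP b.+1 k) => [lt_b1 | ge_b1].
  by rewrite modn_small // (ltn_eqF lt_b1); case: ltngtP.
have -> : b.+1 = k by lia.
by rewrite modnn eqxx leq0n; case: ltngtP => //; lia.
Qed.

End PartialSums.

Section Words.
Variables k n : nat.

Lemma sym_ltn (s : word k n) (i : nat) : (i < n)%N -> (sym s i < k)%N.
Proof.
move=> lt_i_n; rewrite /sym (nth_map (tnth s (Ordinal lt_i_n))) ?size_tuple //.
exact: ltn_ord.
Qed.

Lemma hist_count_val (s : word k n) (a : 'I_k) :
  hist s a = (count_mem (val a) (map val s))%:Z.
Proof.
by rewrite /hist count_map; congr (Posz _); apply: eq_count => x /=; rewrite inj_eq.
Qed.

Lemma word_val_headI (s : word k n) : (0 < n)%N ->
  map val s = sym s 0 :: behead (map val s).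
Proof.
by rewrite /sym; case: (map val s) (size_map val s) => [|x u] //=; rewrite size_tuple => <-.
Qed.

Lemma dB_arc_shift (s t : word k n) : (0 < n)%N -> dB_arc s t ->
  map val t = rcons (behead (map val s)) (sym t n.-1).
Proof.
move=> n_gt0 st; apply: (@eq_from_nth _ 0%N).
  by rewrite size_rcons size_behead !size_map !size_tuple prednK.
rewrite size_map size_tuple => i lt_i_n.
rewrite nth_rcons size_behead size_map size_tuple nth_behead.
case: ltngtP => [lt_i_n1 | | -> //]; last by lia.
by symmetry; apply: st; rewrite -ltn_predRL.
Qed.

Lemma hist_dB_arc (s t : word k n) (a : 'I_k) : (0 < n)%N -> dB_arc s t ->
  hist s a + ind (sym t n.-1) a = hist t a + ind (sym s 0) a.
Proof.
move=> n_gt0 st; rewrite !hist_count_val (dB_arc_shift n_gt0 st).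
rewrite [in LHS]word_val_headI // -cats1 count_cat /= /ind.
by rewrite addn0 [_ == sym t _]eq_sym [_ == sym s _]eq_sym !PoszD; ring.
Qed.

Lemma valid_arc_hist (d : depth_assignment k n) (s t : word k n) (a : 'I_k) :
  (0 < n)%N -> dB_arc s t -> valid_arc d s t ->
  hist s a + ind (d s) a - (hist t a + ind (d t) a)
    = ind (sym s 0) a - ind ((sym s 0).+1 %% k) a.
Proof.
move=> n_gt0 st [[succ_b_c eq_d] | [succ_b_dt c_ds]];
  have := hist_dB_arc a n_gt0 st.
  by rewrite -succ_b_c eq_d; lia.
by rewrite succ_b_dt c_ds; lia.
Qed.

End Words.

Theorem lemma3 (k n : nat) (hk : (1 <= k)%N) (hn : (1 <= n)%N)
  (d : depth_assignment k n) (s t : word k n) :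
  dB_arc s t -> valid_arc d s t ->
  eqmodK (ind (sym s 0%N))
    (fun i => psum (fun a => hist s a + ind (d s) a) i
            - psum (fun a => hist t a + ind (d t) a) i).
Proof.
move=> st valid; exists (((sym s 0).+1 == k) : nat)%:Z => i.
rewrite psumB (eq_psum (fun a => valid_arc_hist a hn st valid)) -psumB.
exact/ind_sub_psum_succ/sym_ltn.
Qed.
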